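(* Let $\mathsf F$ be a $\Gamma$-graded field, $\varepsilon\in\Gamma_{\mathsf F}$, and $\Phi=(\mathsf V,q,b)$ an $\varepsilon$-shifted quadratic space over $\mathsf F$ of type $T\in\{I,II,\tau\text{-}III\}$ ($\tau\in\mathsf F_\varepsilon\setminus\{0\}$). For $\Lambda\in\Gamma/\Gamma_{\mathsf F}$ let $\Phi_\Lambda=(\mathsf V_\Lambda,q|_{\mathsf V_\Lambda},b|_{\mathsf V_\Lambda})$, and for an orbit $P=\{\Lambda,\bar\Lambda\}$ of the involution $[\gamma]\mapsto[\bar\gamma]$ on $(\Gamma/\Gamma_{\mathsf F})\setminus(\frac12\Gamma_{\mathsf F}/\Gamma_{\mathsf F})$ let $\Phi_P$ be the restriction of $\Phi$ to $\mathsf V_\Lambda+\mathsf V_{\bar\Lambda}$. Then $$\Phi=\Big(\mathop{\perp}_{\Lambda\in\frac12\Gamma_{\mathsf F}/\Gamma_{\mathsf F}}\Phi_\Lambda\Big)\perp\Psi,\qquad\Psi=\mathop{\perp}_{P}\Phi_P,$$ where $\Psi$ and all $\Phi_\Lambda$ ($\Lambda\in\frac12\Gamma_{\mathsf F}/\Gamma_{\mathsf F}$) are $\varepsilon$-shifted spaces of type $T$, and $\Psi$ is metabolic.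
   Context: $\Gamma$ is a divisible torsion-free abelian group; $\mathsf F=\bigoplus\mathsf F_\gamma$ a $\Gamma$-graded field (graded commutative ring, nonzero homogeneous elements invertible), $\Gamma_{\mathsf F}=\{\gamma:\mathsf F_\gamma\ne0\}$, $\frac12\Gamma_{\mathsf F}=\{\gamma:2\gamma\in\Gamma_{\mathsf F}\}$. For $\gamma\in\Gamma$: $[\gamma]=\gamma+\Gamma_{\mathsf F}$, $\mathsf V_{[\gamma]}=\bigoplus_{\delta\in\Gamma_{\mathsf F}}\mathsf V_{\gamma+\delta}$, $\bar\gamma=-(\gamma+\varepsilon)$; since $\varepsilon\in\Gamma_{\mathsf F}$, $[\gamma]=[\bar\gamma]$ for $\gamma\in\frac12\Gamma_{\mathsf F}$ and the involution has no fixed points outside $\frac12\Gamma_{\mathsf F}/\Gamma_{\mathsf F}$. An $\varepsilon$-shifted quadratic space is $(\mathsf V,q,b)$ with $\mathsf V$ a finite-dimensional graded $\mathsf F$-vector space, $q$ a graded quadratic form ($q(\lambda x)=\lambda^2q(x)$, polar form $b_q$ $0$-shifted bilinear, $q(\mathsf V_\gamma)\subset\mathsf F_{2\gamma}$), $b$ a nondegenerate symmetric bilinear form with $b(\mathsf V_\gamma,\mathsf V_\delta)\subset\mathsf F_{\gamma+\delta+\varepsilon}$, and $b_q=\lambda b$ for some $\lambda\in\mathsf F$. Types: $I$: $\varepsilon=0$, $b=b_q$ (or $\mathsf V=0$); $II$: $q$ totally singular ($q(x+y)=q(x)+q(y)$) and $b$ alternating; $\tau$-$III$: $q(x)=\tau^{-1}b(x,x)$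 for all $x$. Metabolic: there is a graded subspace $\mathsf L$ with $\dim\mathsf L=\frac12\dim\mathsf V$ and $q(\mathsf L)=0=b(\mathsf L,\mathsf L)$. Orthogonal sums are with respect to $b$. *)

(* Graded fields / graded vector spaces / epsilon-shifted
   quadratic spaces, modelled internally: a Gamma-grading is a family of
   Prop-valued predicates (homogeneous components) forming a direct sum. *)
From HB Require Import structures.
From mathcomp Require Import all_boot all_order all_algebra.
From Stdlib Require List.
Set Implicit Arguments. Unset Strict Implicit. Unset Printing Implicit Defensive.
Import Order.TTheory GRing.Theory.
Local Open Scope ring_scope.

(* W is the internal direct sum of the pieces U i (i with J i), where two
   indices i, j with [same i j] denote the same piece. *)
Definition dsum (V : zmodType) (W : V -> Prop) (I : Type) (J : I -> Prop)
    (same : I -> I -> Prop) (U : I -> V -> Prop) : Prop :=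
  (forall i x, J i -> U i x -> W x) /\
  (forall x, W x -> exists s : seq (I * V),
       List.Forall (fun p => J p.1 /\ U p.1 p.2) s /\ x = \sum_(p <- s) p.2) /\
  (forall s : seq (I * V),
       List.Forall (fun p => J p.1 /\ U p.1 p.2) s ->
       List.ForallOrdPairs (fun p p' => ~ same p.1 p'.1) s ->
       \sum_(p <- s) p.2 = 0 -> List.Forall (fun p => p.2 = 0) s).

Definition orth_sum (V : zmodType) (R : zmodType) (b : V -> V -> R)
    (W : V -> Prop) (I : Type) (J : I -> Prop)
    (same : I -> I -> Prop) (U : I -> V -> Prop) : Prop :=
  dsum W J same U /\
  (forall i j x y, J i -> J j -> ~ same i j -> U i x -> U j y -> b x y = 0).

Definition divisible_torsion_free (G : zmodType) : Prop :=
  (forall (n : nat) (g : G), (0 < n)%N -> g *+ n = 0 -> g = 0) /\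
  (forall (n : nat) (g : G), (0 < n)%N -> exists h : G, h *+ n = g).

Definition graded_field (G : zmodType) (F : comUnitRingType)
    (Fg : G -> F -> Prop) : Prop :=
  (forall g, Fg g 0) /\
  (forall g a c, Fg g a -> Fg g c -> Fg g (a - c)) /\
  Fg 0 1 /\
  (forall g h a c, Fg g a -> Fg h c -> Fg (g + h) (a * c)) /\
  dsum (fun _ : F => True) (fun _ : G => True) eq Fg /\
  (forall g a, Fg g a -> a != 0 -> a \is a GRing.unit).

Section Graded.
Variables (G : zmodType) (F : comUnitRingType) (Fg : G -> F -> Prop).

Definition GammaF (g : G) : Prop := exists a : F, Fg g a /\ a != 0.
Definition halfGammaF (g : G) : Prop := GammaF (g *+ 2).
Definition same_coset (g h : G) : Prop := GammaF (h - g).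

Variable (V : lmodType F) (Vg : G -> V -> Prop).

Definition graded_space : Prop :=
  (forall g, Vg g 0) /\
  (forall g x y, Vg g x -> Vg g y -> Vg g (x - y)) /\
  (forall g h a x, Fg g a -> Vg h x -> Vg (g + h) (a *: x)) /\
  dsum (fun _ : V => True) (fun _ : G => True) eq Vg.

Definition homogeneous (x : V) : Prop := exists g, Vg g x.

Definition graded_subspace (W : V -> Prop) : Prop :=
  W 0 /\ (forall a x y, W x -> W y -> W (a *: x + y)) /\
  (forall x, W x -> exists s : seq (G * V),
       List.Forall (fun p => Vg p.1 p.2 /\ W p.2) s /\ x = \sum_(p <- s) p.2).

Definition graded_basis (W : V -> Prop) (s : seq V) : Prop :=
  List.Forall (fun x => homogeneous x /\ W x) s /\
  (forall c : 'I_(size s) -> F,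
      \sum_(i < size s) c i *: s`_i = 0 -> forall i, c i = 0) /\
  (forall x, W x -> exists c : 'I_(size s) -> F,
      x = \sum_(i < size s) c i *: s`_i).

Definition has_dim (W : V -> Prop) (n : nat) : Prop :=
  exists s, graded_basis W s /\ size s = n.

Definition fin_dim (W : V -> Prop) : Prop := exists n, has_dim W n.

Definition Vcoset (g : G) (x : V) : Prop :=
  exists s : seq (G * V),
    List.Forall (fun p => same_coset g p.1 /\ Vg p.1 p.2) s /\
    x = \sum_(p <- s) p.2.

Variable (eps : G).

Definition gbar (g : G) : G := - (g + eps).

Variables (q : V -> F) (b : V -> V -> F).

Definition polar (x y : V) : F := q (x + y) - q x - q y.

Definition eps_quad_space (W : V -> Prop) : Prop :=
  graded_subspace W /\ fin_dim W /\
  (forall a x, W x -> q (a *: x) = a ^+ 2 * q x) /\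
  (forall a x y z, W x -> W y -> W z ->
      polar (a *: x + y) z = a * polar x z + polar y z) /\
  (forall g h x y, W x -> W y -> Vg g x -> Vg h y -> Fg (g + h) (polar x y)) /\
  (forall g x, W x -> Vg g x -> Fg (g *+ 2) (q x)) /\
  (forall a x y z, W x -> W y -> W z -> b (a *: x + y) z = a * b x z + b y z) /\
  (forall x y, W x -> W y -> b x y = b y x) /\
  (forall g h x y, W x -> W y -> Vg g x -> Vg h y -> Fg (g + h + eps) (b x y)) /\
  (forall x, W x -> (forall y, W y -> b x y = 0) -> x = 0) /\
  (exists lam : F, forall x y, W x -> W y -> polar x y = lam * b x y).

Definition metabolic (W : V -> Prop) : Prop :=
  exists L : V -> Prop,
    graded_subspace L /\ (forall x, L x -> W x) /\
    (exists n m, has_dim W n /\ has_dim L m /\ (m * 2)%N = n) /\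
    (forall x, L x -> q x = 0) /\ (forall x y, L x -> L y -> b x y = 0).

End Graded.

Inductive qtype (F : Type) : Type := TypeI | TypeII | TypeIII of F.
Arguments TypeI {F}. Arguments TypeII {F}.

Definition of_type (G : zmodType) (F : comUnitRingType) (V : lmodType F)
    (eps : G) (q : V -> F) (b : V -> V -> F) (T : qtype F)
    (W : V -> Prop) : Prop :=
  match T with
  | TypeI => (eps = 0 /\ forall x y, W x -> W y -> b x y = polar q x y)
             \/ (forall x, W x -> x = 0)
  | TypeII => (forall x y, W x -> W y -> q (x + y) = q x + q y) /\
              (forall x, W x -> b x x = 0)
  | TypeIII tau => forall x, W x -> q x = tau^-1 * b x x
  end.

From HB Require Import structures.
From mathcomp Require Import all_boot all_order all_algebra.
From mathcomp Require Import ring.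
From Stdlib Require List.
From Stdlib Require Import ClassicalEpsilon FunctionalExtensionality PropExtensionality.
Set Implicit Arguments. Unset Strict Implicit. Unset Printing Implicit Defensive.
Import Order.TTheory GRing.Theory.
Local Open Scope ring_scope.

(* Fix a homogeneous basis (e_i) of V, of degrees deg i.  A homogeneous vector
   of degree h has no coordinate on e_i unless [deg i] = [h]; hence every
   subspace occurring in the statement (V_Lambda, V_P, the sum H of the
   V_Lambda with Lambda in 1/2 Gamma_F / Gamma_F, and Psi) is the span
   [supported S] of the basis vectors indexed by some set S of indices.  Since
   b(e_i, e_j) lies in F_{deg i + deg j + eps}, it vanishes unless
   [deg j] = [bar (deg i)].
   For metabolicity of Psi we choose one coset in every orbit {Lambda, bar
   Lambda} outside 1/2 Gamma_F / Gamma_F: the chosen basis vectors span a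
   totally isotropic subspace L, and a rank argument over the degree-zero
   subfield F_0 shows that there are as many chosen as non-chosen indices, so
   dim Psi = 2 dim L. *)

Definition asb (P : Prop) : bool :=
  if excluded_middle_informative P then true else false.

Lemma asbP (P : Prop) : reflect P (asb P).
Proof. rewrite /asb; case: excluded_middle_informative => h; by constructor. Qed.

Lemma pred_ext (T : Type) (P Q : T -> Prop) : (forall x, P x <-> Q x) -> P = Q.
Proof. by move=> h; apply: functional_extensionality => x; apply: propositional_extensionality. Qed.

Lemma ForallP (T : eqType) (P : T -> Prop) (s : seq T) :
  List.Forall P s <-> forall x, x \in s -> P x.
Proof.
elim: s => [|a s IH]; first by split => // _; constructor.
split => [h|h]; last first.
  constructor; first by apply: h; rewrite mem_head.
  by apply/IH => x xs; apply: h; rewrite in_cons xs orbT.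
inversion h; subst => x; rewrite in_cons => /orP [/eqP ->|] //.
by move: x; apply/IH.
Qed.

Lemma Forall_map (A : eqType) (B : Type) (P : B -> Prop) (f : A -> B) (s : seq A) :
  (forall x, x \in s -> P (f x)) -> List.Forall P [seq f x | x <- s].
Proof.
elim: s => [|a s IH] h /=; constructor; first by apply: h; rewrite mem_head.
by apply: IH => x xs; apply: h; rewrite in_cons xs orbT.
Qed.

Lemma Forall_ord_pairs_uniq (T W : eqType) (f : T -> W) (r : seq T) :
  uniq r -> List.ForallOrdPairs (fun p p' => ~ p.1 = p'.1) [seq (x, f x) | x <- r].
Proof.
elim: r => [|a r IH] /=; first by constructor.
case/andP => ar ur; constructor; last exact: IH.
by apply/ForallP => p /mapP [x xr ->] /= ax; subst; rewrite xr in ar.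
Qed.

Section HomogeneousComponents.
Variables (G V : zmodType) (U : G -> V -> Prop).
Hypothesis U0 : forall g, U g 0.
Hypothesis UB : forall g x y, U g x -> U g y -> U g (x - y).
Hypothesis Udsum : dsum (fun _ => True) (fun _ => True) eq U.

Lemma UD g x y : U g x -> U g y -> U g (x + y).
Proof.
move=> hx hy; have hNy : U g (- y) by rewrite -sub0r; apply: UB.
by rewrite -[y]opprK; apply: UB.
Qed.

Lemma Usum (T : Type) (r : seq T) (P : pred T) g (f : T -> V) :
  (forall i, P i -> U g (f i)) -> U g (\sum_(i <- r | P i) f i).
Proof. by move=> h; elim/big_ind: _ => //; apply: UD. Qed.

Definition component (s : seq (G * V)) (g : G) : V := \sum_(p <- s | p.1 == g) p.2.

Lemma sum_components s (r : seq G) : uniq r -> {subset map fst s <= r} ->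
  \sum_(p <- s) p.2 = \sum_(h <- r) component s h.
Proof.
move=> ur sr; rewrite /component.
under [RHS]eq_bigr do rewrite big_mkcond.
rewrite exchange_big /= [LHS]big_seq [RHS]big_seq; apply: eq_bigr => p ps.
have pr : p.1 \in r by apply: sr; apply/mapP; exists p.
rewrite (bigD1_seq _ pr ur) /= eqxx big1 ?addr0 // => h /negbTE.
by rewrite eq_sym => ->.
Qed.

Lemma component_unique s t : List.Forall (fun p => U p.1 p.2) s ->
  List.Forall (fun p => U p.1 p.2) t ->
  \sum_(p <- s) p.2 = \sum_(p <- t) p.2 -> forall g, component s g = component t g.
Proof.
move=> /ForallP hs /ForallP ht est g.
have comp_in u : (forall p, p \in u -> U p.1 p.2) -> forall h, U h (component u h).
  by move=> hu h; rewrite /component big_seq_cond; apply: Usum => p /andP [/hu ? /eqP <-].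
set r := undup (map fst (s ++ t)).
have sr : {subset map fst s <= r} by move=> x xs; rewrite mem_undup map_cat mem_cat xs.
have tr : {subset map fst t <= r}.
  by move=> x xt; rewrite mem_undup map_cat mem_cat xt orbT.
set w := [seq (h, component s h - component t h) | h <- r].
have hw : List.Forall (fun p => True /\ U p.1 p.2) w.
  by apply/ForallP => p /mapP [h hr ->]; split => //; apply: UB; apply: comp_in.
have sw : \sum_(p <- w) p.2 = 0.
  rewrite big_map sumrB -(sum_components (undup_uniq _) sr).
  by rewrite -(sum_components (undup_uniq _) tr) est subrr.
have /ForallP w0 := proj2 (proj2 Udsum) w hw (Forall_ord_pairs_uniq _ (undup_uniq _)) sw.
have [gr|ngr] := boolP (g \in r).
  by apply/eqP; rewrite -subr_eq0; apply/eqP/(w0 (g, _)); apply/mapP; exists g.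
have out u : {subset map fst u <= r} -> component u g = 0.
  move=> ur; rewrite /component big_seq_cond big1 // => p /andP [ps /eqP pg].
  by move: ngr; rewrite -pg (ur _ (map_f fst ps)).
by rewrite !out.
Qed.
End HomogeneousComponents.

Section GradedField.
Variables (G : zmodType) (F : comUnitRingType) (Fg : G -> F -> Prop).
Hypothesis hF : graded_field Fg.

Lemma Fg0 g : Fg g 0. Proof. by case: hF => h _; apply: h. Qed.
Lemma FgB g a c : Fg g a -> Fg g c -> Fg g (a - c).
Proof. by case: hF => _ [h _]; apply: h. Qed.
Lemma Fg1 : Fg 0 1. Proof. by case: hF => _ [_ [h _]]. Qed.
Lemma FgM g h a c : Fg g a -> Fg h c -> Fg (g + h) (a * c).
Proof. by case: hF => _ [_ [_ [hh _]]]; apply: hh. Qed.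
Lemma Fdsum : dsum (fun _ : F => True) (fun _ : G => True) eq Fg.
Proof. by case: hF => _ [_ [_ [_ [h _]]]]. Qed.
Lemma Funit g a : Fg g a -> a != 0 -> a \is a GRing.unit.
Proof. by case: hF => _ [_ [_ [_ [_ hh]]]]; apply: hh. Qed.

Lemma homogeneous_decomposition (c : F) : exists s : seq (G * F),
  List.Forall (fun p => Fg p.1 p.2) s /\ c = \sum_(p <- s) p.2.
Proof.
have [_ [ex _]] := Fdsum; have [s [hs es]] := ex c I.
by exists s; split => //; apply: List.Forall_impl hs => p [].
Qed.

Lemma Fg_outside_GammaF g a : Fg g a -> ~ GammaF Fg g -> a = 0.
Proof. by move=> h nh; apply/eqP; apply/negP => /negP nz; apply: nh; exists a. Qed.

(* The inverse of a homogeneous unit of degree g is homogeneous of degree -g: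
   compare the degree-0 components of a * a^-1 = 1. *)
Lemma Fg_inv g a : Fg g a -> a \is a GRing.unit -> Fg (- g) a^-1.
Proof.
move=> ha ua; have [s [hs es]] := homogeneous_decomposition a^-1.
set s' := [seq (g + p.1, a * p.2) | p <- s].
have hs' : List.Forall (fun p => Fg p.1 p.2) s'.
  by apply/ForallP => p /mapP [p0 p0s ->]; apply: FgM => //; move/ForallP: hs; apply.
have h1 : List.Forall (fun p => Fg p.1 p.2) [:: ((0 : G), (1 : F))].
  by constructor => //; exact: Fg1.
have e : \sum_(p <- s') p.2 = \sum_(p <- [:: ((0 : G), (1 : F))]) p.2.
  by rewrite big_map -mulr_sumr -es mulrV // big_seq1.
have := component_unique Fg0 FgB Fdsum hs' h1 e 0.
rewrite /component big_cons big_nil /= eqxx addr0 big_map /=.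
under eq_bigl do rewrite addrC addr_eq0.
rewrite -mulr_sumr => e1.
have -> : a^-1 = \sum_(p <- s | p.1 == - g) p.2.
  by rewrite -[RHS]mul1r -(mulVr ua) -mulrA e1 mulr1.
move/ForallP: hs => hs; rewrite big_seq_cond; apply: (Usum Fg0 FgB) => p.
by case/andP => /hs hp /eqP <-.
Qed.

Lemma GammaF0 : GammaF Fg 0.
Proof. by exists 1; split; [exact: Fg1 | exact: oner_neq0]. Qed.

Lemma GammaFD g h : GammaF Fg g -> GammaF Fg h -> GammaF Fg (g + h).
Proof.
move=> [a [ha na]] [c [hc nc]]; exists (a * c); split; first exact: FgM.
have : a * c \is a GRing.unit by rewrite unitrM (Funit ha na) (Funit hc nc).
by apply: contraTneq => ->; rewrite unitr0.
Qed.

Lemma GammaFN g : GammaF Fg g -> GammaF Fg (- g).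
Proof.
move=> [a [ha na]]; exists a^-1; split; last by rewrite invr_eq0.
exact: Fg_inv ha (Funit ha na).
Qed.

Lemma same_coset_refl g : same_coset Fg g g.
Proof. by rewrite /same_coset subrr; exact: GammaF0. Qed.

Lemma same_coset_sym g h : same_coset Fg g h -> same_coset Fg h g.
Proof. by rewrite /same_coset => /GammaFN; rewrite opprB. Qed.

Lemma same_coset_trans g h k :
  same_coset Fg g h -> same_coset Fg h k -> same_coset Fg g k.
Proof. by rewrite /same_coset => hgh hhk; rewrite -(subrKA h) addrC; apply: GammaFD. Qed.
End GradedField.

Section Decomposition.
Variables (G : zmodType) (F : comUnitRingType) (Fg : G -> F -> Prop).
Hypothesis hF : graded_field Fg.
Variables (eps : G) (V : lmodType F) (Vg : G -> V -> Prop).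
Variables (q : V -> F) (b : V -> V -> F).
Hypothesis heps : GammaF Fg eps.
Hypothesis hV : graded_space Fg Vg.
Hypothesis hPhi : eps_quad_space Fg Vg eps q b (fun _ => True).

(* The degree-zero part F_0 of the graded field F is a field.  Its ring
   instances depend on the hypothesis hF, so F_0 is built inside this
   section, where hF is fixed. *)
Definition degree_zero : pred F := fun a => asb (Fg 0 a).

Lemma degree_zero_divring : divring_closed degree_zero.
Proof.
split; first exact/asbP/(Fg1 hF).
  by move=> a c /asbP ha /asbP hc; apply/asbP; exact: FgB.
move=> a c /asbP ha /asbP hc; apply/asbP.
have [->|nz] := eqVneq c 0; first by rewrite invr0 mulr0; exact: Fg0.
rewrite -[0 : G]addr0; apply: (FgM hF ha); rewrite -oppr0.
exact: Fg_inv hc (Funit hF hc nz).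
Qed.

Record F0 := MkF0 { F0_val : F; _ : degree_zero F0_val }.
HB.instance Definition _ := [isSub for F0_val].
HB.instance Definition _ := [Choice of F0 by <:].
HB.instance Definition _ :=
  GRing.SubChoice_isSubComUnitRing.Build F degree_zero F0 degree_zero_divring.

Lemma F0_field : GRing.field_axiom F0.
Proof.
move=> x nx; rewrite -(inj_eq val_inj) /= in nx.
by apply: (Funit hF _ nx); apply/asbP; exact: (valP x).
Qed.
HB.instance Definition _ := GRing.ComUnitRing_isField.Build F0 F0_field.

Notation sc := (same_coset Fg).
Notation half := (halfGammaF Fg).
Notation gb := (gbar eps).
Notation Vc := (Vcoset Fg Vg).

Lemma Vg0 g : Vg g 0. Proof. by case: hV => h _; apply: h. Qed.
Lemma VgB g x y : Vg g x -> Vg g y -> Vg g (x - y).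
Proof. by case: hV => _ [h _]; apply: h. Qed.
Lemma VgZ g h a x : Fg g a -> Vg h x -> Vg (g + h) (a *: x).
Proof. by case: hV => _ [_ [hh _]]; apply: hh. Qed.
Lemma Vdsum : dsum (fun _ : V => True) (fun _ : G => True) eq Vg.
Proof. by case: hV => _ [_ [_ hh]]. Qed.

Lemma qZ a x : q (a *: x) = a ^+ 2 * q x.
Proof. by case: hPhi => _ [_ [h _]]; apply: h. Qed.
Lemma q_deg g x : Vg g x -> Fg (g *+ 2) (q x).
Proof. by case: hPhi => _ [_ [_ [_ [_ [h _]]]]]; apply: h. Qed.
Lemma b_linear a x y z : b (a *: x + y) z = a * b x z + b y z.
Proof. by case: hPhi => _ [_ [_ [_ [_ [_ [h _]]]]]]; apply: h. Qed.
Lemma b_sym x y : b x y = b y x.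
Proof. by case: hPhi => _ [_ [_ [_ [_ [_ [_ [h _]]]]]]]; apply: h. Qed.
Lemma b_deg g h x y : Vg g x -> Vg h y -> Fg (g + h + eps) (b x y).
Proof. by case: hPhi => _ [_ [_ [_ [_ [_ [_ [_ [hh _]]]]]]]] hx hy; apply: hh. Qed.
Lemma b_nondeg x : (forall y, b x y = 0) -> x = 0.
Proof. by case: hPhi => _ [_ [_ [_ [_ [_ [_ [_ [_ [hh _]]]]]]]]] hy; apply: hh => // y _. Qed.
Lemma polar_prop : exists lam, forall x y, polar q x y = lam * b x y.
Proof.
case: hPhi => _ [_ [_ [_ [_ [_ [_ [_ [_ [_ [lam hl]]]]]]]]]].
by exists lam => x y; apply: hl.
Qed.

Lemma q0 : q 0 = 0.
Proof. by rewrite -(scale0r 0) qZ expr0n mul0r. Qed.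
Lemma bD x y z : b (x + y) z = b x z + b y z.
Proof. by rewrite -{1}[x]scale1r b_linear mul1r. Qed.
Lemma b0 z : b 0 z = 0.
Proof. by apply: (addrI (b 0 z)); rewrite -bD !addr0. Qed.
Lemma bZ a x z : b (a *: x) z = a * b x z.
Proof. by rewrite -[a *: x]addr0 b_linear b0 addr0. Qed.
Lemma bZr a x z : b z (a *: x) = a * b z x.
Proof. by rewrite b_sym bZ b_sym. Qed.
Lemma b_suml (T : Type) (r : seq T) (P : pred T) (f : T -> V) z :
  b (\sum_(i <- r | P i) f i) z = \sum_(i <- r | P i) b (f i) z.
Proof. by elim/big_rec2: _ => [|i u v _ <-]; rewrite ?b0 ?bD. Qed.
Lemma b_sumr (T : Type) (r : seq T) (P : pred T) (f : T -> V) z :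
  b z (\sum_(i <- r | P i) f i) = \sum_(i <- r | P i) b z (f i).
Proof. by rewrite b_sym b_suml; apply: eq_bigr => i _; rewrite b_sym. Qed.

Lemma basis_exists : exists e, graded_basis Vg (fun _ => True) e.
Proof. by case: hPhi => _ [[k [e [he _]]] _]; exists e. Qed.
Definition basis := proj1_sig (constructive_indefinite_description _ basis_exists).
Lemma basisP : graded_basis Vg (fun _ => True) basis.
Proof. exact: (proj2_sig (constructive_indefinite_description _ basis_exists)). Qed.
Definition n := size basis.
Definition ei (i : 'I_n) := basis`_i.

Lemma ei_homogeneous (i : 'I_n) : exists g, Vg g (ei i).
Proof. by case: basisP => /ForallP h _; case: (h (ei i) (mem_nth 0 (ltn_ord i))). Qed.
Definition deg (i : 'I_n) : G :=
  proj1_sig (constructive_indefinite_description _ (ei_homogeneous i)).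
Lemma degP i : Vg (deg i) (ei i).
Proof. exact: (proj2_sig (constructive_indefinite_description _ (ei_homogeneous i))). Qed.

Lemma ei_free (c : 'I_n -> F) : \sum_(i < n) c i *: ei i = 0 -> forall i, c i = 0.
Proof. by case: basisP => _ [h _]; apply: h. Qed.
Lemma ei_span x : exists c : 'I_n -> F, x = \sum_(i < n) c i *: ei i.
Proof. by case: basisP => _ [_ h]; apply: h. Qed.

Definition coord x := proj1_sig (constructive_indefinite_description _ (ei_span x)).
Lemma coordE x : x = \sum_(i < n) coord x i *: ei i.
Proof. exact: (proj2_sig (constructive_indefinite_description _ (ei_span x))). Qed.

Lemma coord_unique x (c : 'I_n -> F) :
  x = \sum_(i < n) c i *: ei i -> forall i, coord x i = c i.
Proof.
move=> ex i; apply/eqP; rewrite -subr_eq0; apply/eqP; move: i; apply: ei_free.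
by under eq_bigr do rewrite scalerBl; rewrite sumrB -coordE -ex subrr.
Qed.

Lemma coord_linear a x y i : coord (a *: x + y) i = a * coord x i + coord y i.
Proof.
apply: (coord_unique (c := fun j => a * coord x j + coord y j)).
rewrite [in LHS](coordE x) [in LHS](coordE y) scaler_sumr -big_split /=.
by apply: eq_bigr => j _; rewrite scalerDl scalerA.
Qed.
Lemma coord0 i : coord 0 i = 0.
Proof. by apply: (coord_unique (c := fun _ => 0)); rewrite big1 // => j _; rewrite scale0r. Qed.
Lemma coordD x y i : coord (x + y) i = coord x i + coord y i.
Proof. by rewrite -{1}[x]scale1r coord_linear mul1r. Qed.
Lemma coordB x y i : coord (x - y) i = coord x i - coord y i.
Proof. by rewrite -scaleN1r addrC coord_linear mulN1r addrC. Qed.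
Lemma coord_sum (T : Type) (r : seq T) (P : pred T) (f : T -> V) i :
  coord (\sum_(k <- r | P k) f k) i = \sum_(k <- r | P k) coord (f k) i.
Proof. by elim/big_rec2: _ => [|k u v _ <-]; rewrite ?coord0 ?coordD. Qed.
Lemma coord_ei c j i : coord (c *: ei j) i = if i == j then c else 0.
Proof.
apply: (coord_unique (c := fun i => if i == j then c else 0)).
rewrite (bigD1 j) //= eqxx big1 ?addr0 // => k /negbTE ->.
by rewrite scale0r.
Qed.
Lemma coord_eq0 x : (forall i, coord x i = 0) -> x = 0.
Proof. by move=> h; rewrite (coordE x) big1 // => i _; rewrite h scale0r. Qed.

Definition hdec (c : F) : seq (G * F) :=
  proj1_sig (constructive_indefinite_description _ (homogeneous_decomposition hF c)).
Lemma hdecP c : List.Forall (fun p => Fg p.1 p.2) (hdec c) /\ c = \sum_(p <- hdec c) p.2.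
Proof.
exact: (proj2_sig (constructive_indefinite_description _ (homogeneous_decomposition hF c))).
Qed.

(* A homogeneous vector of degree h has no coordinate on e_i unless
   [deg i] = [h]: expand y in homogeneous components and compare degree h. *)
Lemma coord_homogeneous h y i : Vg h y -> ~ sc (deg i) h -> coord y i = 0.
Proof.
move=> hy nsc.
set t := flatten [seq [seq (a.1 + deg j, a.2 *: ei j) | a <- hdec (coord y j)]
                 | j <- index_enum 'I_n].
have ht : List.Forall (fun p => Vg p.1 p.2) t.
  apply/ForallP => p /flattenP [u /mapP [j _ ->] /mapP [a ain ->]] /=.
  by apply: VgZ (degP j); case: (hdecP (coord y j)) => /ForallP hh _; apply: hh.
have hy1 : List.Forall (fun p => Vg p.1 p.2) [:: (h, y)] by constructor.
have et : \sum_(p <- t) p.2 = \sum_(p <- [:: (h, y)]) p.2.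
  rewrite big_seq1 big_flatten big_map [RHS](coordE y).
  apply: eq_bigr => j _; rewrite big_map -scaler_suml.
  by case: (hdecP (coord y j)) => _ <-.
have := component_unique Vg0 VgB Vdsum ht hy1 et h.
rewrite /component big_cons big_nil eqxx addr0 /= big_flatten big_map => ey.
have {}ey : y = \sum_(j < n)
    (\sum_(a <- hdec (coord y j) | a.1 + deg j == h) a.2) *: ei j.
  by rewrite -{1}ey; apply: eq_bigr => j _; rewrite big_map scaler_suml.
rewrite (coord_unique ey i) big_seq_cond big1 // => a /andP [ain /eqP ea].
have : Fg a.1 a.2 by case: (hdecP (coord y i)) => /ForallP hh _; apply: hh.
rewrite (_ : a.1 = h - deg i); last by rewrite -ea addrK.
by move=> ha; exact: Fg_outside_GammaF ha nsc.
Qed.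

Definition supported (S : 'I_n -> Prop) (x : V) : Prop :=
  forall i, ~ S i -> coord x i = 0.

Definition idx (S : 'I_n -> Prop) : seq 'I_n := [seq i <- index_enum 'I_n | asb (S i)].

Definition proj (S : 'I_n -> Prop) (x : V) : V := \sum_(i <- idx S) coord x i *: ei i.

Lemma idx_uniq S : uniq (idx S).
Proof. by rewrite filter_uniq // index_enum_uniq. Qed.
Lemma mem_idx S i : (i \in idx S) = asb (S i).
Proof. by rewrite mem_filter mem_index_enum andbT. Qed.

Lemma supported_linear S a x y :
  supported S x -> supported S y -> supported S (a *: x + y).
Proof. by move=> hx hy i ni; rewrite coord_linear hx // hy // mulr0 addr0. Qed.
Lemma supportedD S x y : supported S x -> supported S y -> supported S (x + y).
Proof. by rewrite -{2}[x]scale1r; apply: supported_linear. Qed.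
Lemma supported_sum S (T : Type) (r : seq T) (P : pred T) (f : T -> V) :
  (forall k, P k -> supported S (f k)) -> supported S (\sum_(k <- r | P k) f k).
Proof.
move=> h; elim/big_rec: _ => [i _|k x Pk hx]; first by rewrite coord0.
exact: supportedD (h k Pk) hx.
Qed.
Lemma supported_mono (S S' : 'I_n -> Prop) x :
  (forall i, S i -> S' i) -> supported S x -> supported S' x.
Proof. by move=> hS hx i ni; apply: hx => /hS. Qed.
Lemma supported_ei (S : 'I_n -> Prop) j c : S j -> supported S (c *: ei j).
Proof. by move=> hj i ni; rewrite coord_ei; case: eqP => // ij; subst. Qed.

Lemma coord_proj S x i : coord (proj S x) i = if asb (S i) then coord x i else 0.
Proof.
apply: (coord_unique (c := fun i => if asb (S i) then coord x i else 0)).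
rewrite /proj big_filter big_mkcond; apply: eq_bigr => j _.
by case: ifP; rewrite ?scale0r.
Qed.
Lemma proj_supported S x : supported S (proj S x).
Proof. by move=> i ni; rewrite coord_proj; case: asbP. Qed.
Lemma proj_id S x : supported S x -> proj S x = x.
Proof.
move=> hx; apply/eqP; rewrite -subr_eq0; apply/eqP/coord_eq0 => i.
by rewrite coordB coord_proj; case: asbP => [_|/hx ->]; rewrite ?subrr ?subr0.
Qed.
Lemma proj_split S x : x = proj S x + proj (fun i => ~ S i) x.
Proof.
apply/eqP; rewrite -subr_eq0; apply/eqP/coord_eq0 => i.
rewrite coordB coordD !coord_proj.
by case: asbP => hS; case: asbP => hnS //; rewrite ?addr0 ?add0r ?subrr.
Qed.

Lemma gbarK g : gb (gb g) = g.
Proof. by rewrite /gbar opprD opprK addrK. Qed.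

Lemma gbar_same_coset g h : sc g h -> sc (gb g) (gb h).
Proof.
move=> /(GammaFN hF); rewrite /same_coset /gbar.
have -> // : -(h + eps) - -(g + eps) = -(h - g).
by rewrite opprK opprB addrC opprD addrACA subrr addr0.
Qed.

Lemma half_same_coset g h : half g -> sc g h -> half h.
Proof.
rewrite /halfGammaF /same_coset => hg hs.
have <- : g *+ 2 + ((h - g) + (h - g)) = h *+ 2.
  by rewrite !mulr2n addrACA -addrA addrA [g + _]addrC !subrK.
exact (GammaFD hF hg (GammaFD hF hs hs)).
Qed.

(* [g] is fixed by the involution iff g lies in 1/2 Gamma_F (uses eps in Gamma_F). *)
Lemma fixed_iff_half g : sc g (gb g) <-> half g.
Proof.
rewrite /same_coset /halfGammaF /gbar; split => /(GammaFN hF) h.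
  have <- : -(- (g + eps) - g) - eps = g *+ 2.
    by rewrite opprB opprK addrA addrK mulr2n.
  exact (GammaFD hF h (GammaFN hF heps)).
have <- : -(g *+ 2) - eps = -(g + eps) - g by rewrite mulr2n !opprD addrAC.
exact (GammaFD hF h (GammaFN hF heps)).
Qed.

Lemma half_gbar g : half (gb g) <-> half g.
Proof.
rewrite -!fixed_iff_half gbarK.
by split => /(same_coset_sym hF).
Qed.

Lemma Vcoset_ei j c : Vc (deg j) (c *: ei j).
Proof.
have [s [/ForallP hs ->]] := homogeneous_decomposition hF c.
exists [seq (a.1 + deg j, a.2 *: ei j) | a <- s & a.2 != 0]; split; last first.
  rewrite big_map big_filter scaler_suml [LHS](bigID (fun a => a.2 != 0)) /=.
  by rewrite [X in _ + X]big1 ?addr0 // => a /negPn/eqP ->; rewrite scale0r.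
apply/ForallP => p /mapP [a]; rewrite mem_filter => /andP [nz ains] -> /=.
split; last exact: VgZ (hs a ains) (degP j).
by rewrite /same_coset addrK; exists a.2; split => //; apply: hs.
Qed.

Lemma Vcoset_same_coset g h x : sc g h -> Vc h x -> Vc g x.
Proof.
move=> hgh [s [/ForallP hs ->]]; exists s; split => //.
by apply/ForallP => p /hs [hp1 hp2]; split => //; exact: (same_coset_trans hF hgh hp1).
Qed.

Lemma Vcoset_sum (T : Type) (r : seq T) (P : pred T) g (f : T -> V) :
  (forall k, P k -> Vc g (f k)) -> Vc g (\sum_(k <- r | P k) f k).
Proof.
move=> h; elim/big_rec: _ => [|k x Pk [s [/ForallP hs ->]]].
  by exists [::]; rewrite big_nil.
have [t [/ForallP ht ->]] := h k Pk; exists (t ++ s); rewrite big_cat; split => //.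
by apply/ForallP => p; rewrite mem_cat => /orP [/ht|/hs].
Qed.

Lemma Vcoset_supported g x : Vc g x <-> supported (fun i => sc g (deg i)) x.
Proof.
split => [[s [/ForallP hs ->]] i ni|hx].
  rewrite coord_sum big_seq big1 // => p /hs [hp1 hp2].
  apply: (coord_homogeneous hp2) => hip; apply: ni.
  exact: (same_coset_trans hF hp1 (same_coset_sym hF hip)).
rewrite -(proj_id hx) /proj big_seq; apply: Vcoset_sum => i.
by rewrite mem_idx => /asbP hi; exact: Vcoset_same_coset hi (Vcoset_ei i _).
Qed.

Definition coset_sum (J : G -> Prop) (x : V) : Prop :=
  exists s : seq (G * V),
    List.Forall (fun p => J p.1 /\ Vc p.1 p.2) s /\ x = \sum_(p <- s) p.2.

Lemma coset_sum_supported (J : G -> Prop) x :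
  (forall g h, J g -> sc g h -> J h) ->
  coset_sum J x <-> supported (fun i => J (deg i)) x.
Proof.
move=> hJ; split => [[s [/ForallP hs ->]]|hx].
  rewrite big_seq; apply: supported_sum => p /hs [Jp /Vcoset_supported].
  by apply: supported_mono => i; exact: hJ.
exists [seq (deg i, coord x i *: ei i) | i <- idx (fun i => J (deg i))]; split.
  apply/ForallP => p /mapP [i]; rewrite mem_idx => /asbP Ji -> /=.
  by split => //; exact: Vcoset_ei.
by rewrite big_map -{1}(proj_id hx).
Qed.

Definition same_orbit (g h : G) : Prop := sc g h \/ sc (gb g) h.

Lemma same_orbit_refl g : same_orbit g g.
Proof. by left; exact: same_coset_refl. Qed.
Lemma same_orbit_sym g h : same_orbit g h -> same_orbit h g.
Proof.
case=> hgh; [left; exact: (same_coset_sym hF hgh) | right].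
by rewrite -[g]gbarK; apply/gbar_same_coset/(same_coset_sym hF).
Qed.
Lemma same_orbit_trans g h k : same_orbit g h -> same_orbit h k -> same_orbit g k.
Proof.
case=> h1 [] h2.
- by left; exact: (same_coset_trans hF h1 h2).
- by right; exact: (same_coset_trans hF (gbar_same_coset h1) h2).
- by right; exact: (same_coset_trans hF h1 h2).
- left; apply: (same_coset_trans hF _ h2).
  by rewrite -[g]gbarK; exact: gbar_same_coset h1.
Qed.

Definition orbit_space (g : G) (x : V) : Prop :=
  exists y z, Vc g y /\ Vc (gb g) z /\ x = y + z.

Lemma orbit_space_supported g x :
  orbit_space g x <-> supported (fun i => same_orbit g (deg i)) x.
Proof.
split => [[y [z [/Vcoset_supported hy [/Vcoset_supported hz ->]]]]|hx].
  by apply: supportedD; [move: hy | move: hz]; apply: supported_mono => i; [left | right].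
set S := fun i => sc g (deg i).
exists (proj S x), (x - proj S x); split; first exact/Vcoset_supported/proj_supported.
split; last by rewrite addrC subrK.
apply/Vcoset_supported => i ni; rewrite coordB coord_proj.
case: asbP => [_|nS]; first by rewrite subrr.
by rewrite subr0; apply: hx => -[].
Qed.

(* b(e_i, e_j) lies in F_(deg i + deg j + eps), so it vanishes unless
   [deg j] = [bar (deg i)]. *)
Lemma b_ei i j : ~ sc (gb (deg i)) (deg j) -> b (ei i) (ei j) = 0.
Proof.
move=> ns; have := b_deg (degP i) (degP j).
have -> : deg i + deg j + eps = deg j - gb (deg i).
  by rewrite /gbar opprK [RHS]addrCA addrA.
by move=> h; exact: Fg_outside_GammaF h ns.
Qed.

Lemma b_nondeg_basis z : (forall j, b z (ei j) = 0) -> z = 0.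
Proof.
move=> hz; apply: b_nondeg => y; rewrite (coordE y) b_sumr big1 // => j _.
by rewrite bZr hz mulr0.
Qed.

Lemma b_supported S x j : supported S x -> (forall i, S i -> b (ei i) (ei j) = 0) ->
  b x (ei j) = 0.
Proof.
move=> hx hS; rewrite (coordE x) b_suml big1 // => i _; rewrite bZ.
by case: (asbP (S i)) => [/hS ->|/hx ->]; rewrite ?mulr0 ?mul0r.
Qed.

Lemma supported_orth (S T : 'I_n -> Prop) x y :
  (forall i j, S i -> T j -> ~ sc (gb (deg i)) (deg j)) ->
  supported S x -> supported T y -> b x y = 0.
Proof.
move=> hST hx hy; rewrite (coordE y) b_sumr big1 // => j _; rewrite bZr.
case: (asbP (T j)) => [Tj|/hy ->]; last by rewrite mul0r.
by rewrite (b_supported hx) ?mulr0 // => i Si; apply: b_ei; exact: hST.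
Qed.

Definition bar_closed (S : 'I_n -> Prop) : Prop :=
  forall i j, S i -> sc (gb (deg i)) (deg j) -> S j.

(* b restricted to the span of a bar-closed support is nondegenerate: its
   complement is orthogonal to it. *)
Lemma supported_nondeg (S : 'I_n -> Prop) x : bar_closed S -> supported S x ->
  (forall y, supported S y -> b x y = 0) -> x = 0.
Proof.
move=> hS hx hy; apply: b_nondeg => z.
rewrite (proj_split S z) b_sym bD b_sym hy ?add0r; last exact: proj_supported.
apply: (supported_orth _ (@proj_supported _ z) hx) => i j nSi Sj hij; apply: nSi.
by apply: hS Sj _; rewrite -[deg i]gbarK; apply/gbar_same_coset/(same_coset_sym hF).
Qed.

(* The span of basis vectors is a graded subspace: split each coordinate
   into homogeneous scalars. *)
Lemma supported_graded S : graded_subspace Vg (supported S).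
Proof.
split; first by move=> i _; rewrite coord0.
split; first by move=> a x y; apply: supported_linear.
move=> x hx.
exists (flatten [seq [seq (a.1 + deg i, a.2 *: ei i) | a <- hdec (coord x i)] | i <- idx S]).
split.
  apply/ForallP => p /flattenP [u /mapP [i]]; rewrite mem_idx => /asbP Si -> /mapP [a ain ->].
  split; last exact: supported_ei.
  by apply: VgZ (degP i); case: (hdecP (coord x i)) => /ForallP hh _; apply: hh.
rewrite big_flatten big_map -{1}(proj_id hx); apply: eq_bigr => i _.
by rewrite big_map -scaler_suml; case: (hdecP (coord x i)) => _ <-.
Qed.

Lemma coord_sum_nth (I : seq 'I_n) (i0 : 'I_n) (c : 'I_(size I) -> F) (k : 'I_(size I)) :
  uniq I ->
  coord (\sum_(l < size I) c l *: ei (nth i0 I l)) (nth i0 I k) = c k.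
Proof.
move=> uI; rewrite coord_sum (bigD1 k) //= coord_ei eqxx big1 ?addr0 // => l nlk.
by rewrite coord_ei nth_uniq // ifF //; apply/negbTE; rewrite eq_sym.
Qed.

Lemma supported_basis S : graded_basis Vg (supported S) [seq ei i | i <- idx S].
Proof.
split.
  apply/ForallP => y /mapP [i]; rewrite mem_idx => /asbP Si ->.
  by split; [exists (deg i); exact: degP | rewrite -[ei i]scale1r; exact: supported_ei].
case eI: (idx S) => [|i0 I].
  split => [c _ []//|x hx]; exists (fun _ => 0).
  by rewrite big_ord0 -(proj_id hx) /proj eI big_nil.
rewrite -eI size_map; have uI := idx_uniq S.
have nthE (k : 'I_(size (idx S))) : [seq ei i | i <- idx S]`_k = ei (nth i0 (idx S) k).
  by rewrite (nth_map i0).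
split => [c hc k|x hx].
  by rewrite -(coord_sum_nth i0 c k uI) -(eq_bigr _ (fun l _ => congr1 _ (nthE l))) hc coord0.
exists (fun k => coord x (nth i0 (idx S) k)).
rewrite -{1}(proj_id hx) /proj (big_nth i0) big_mkord.
by apply: eq_bigr => k _; rewrite nthE.
Qed.

Lemma supported_dim S : has_dim Vg (supported S) (size (idx S)).
Proof. by exists [seq ei i | i <- idx S]; rewrite size_map; split => //; exact: supported_basis. Qed.

Lemma supported_quad_space S : bar_closed S -> eps_quad_space Fg Vg eps q b (supported S).
Proof.
move=> hS.
case: hPhi => _ [_ [h3 [h4 [h5 [h6 [h7 [h8 [h9 [_ [lam h11]]]]]]]]]].
split; first exact: supported_graded.
split; first by exists (size (idx S)); exact: supported_dim.
do 7 (split; first by move=> *; auto).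
split; first by move=> x hx hy; exact: supported_nondeg hS hx hy.
by exists lam => *; apply: h11.
Qed.

Definition orbit_rep (g : G) : G := epsilon (inhabits (0 : G)) (same_orbit g).

Lemma orbit_rep_spec g : same_orbit g (orbit_rep g).
Proof. by apply: (epsilon_spec (inhabits 0) (same_orbit g)); exists g; exact: same_orbit_refl. Qed.

Lemma orbit_rep_eq g h : same_orbit g h -> orbit_rep g = orbit_rep h.
Proof.
move=> hgh; rewrite /orbit_rep; congr epsilon; apply: pred_ext => k.
by split=> hk; [apply: same_orbit_trans (same_orbit_sym hgh) hk | apply: same_orbit_trans hgh hk].
Qed.

Definition chosen (g : G) : Prop := sc (orbit_rep g) g.

Lemma chosen_pair g h : ~ half g -> sc (gb g) h -> (chosen h <-> ~ chosen g).
Proof.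
move=> nhg hgh; rewrite /chosen -(@orbit_rep_eq g h); last by right.
have := orbit_rep_spec g; set r := orbit_rep g => hr.
split => [hrh hrg|nrg].
  apply/nhg/fixed_iff_half; apply: (same_coset_trans hF _ (same_coset_sym hF hgh)).
  exact: (same_coset_trans hF (same_coset_sym hF hrg) hrh).
case: hr => [hgr|hgr]; first by case: nrg; exact: (same_coset_sym hF hgr).
exact: (same_coset_trans hF (same_coset_sym hF hgr) hgh).
Qed.

Definition ndeg (i : 'I_n) : G :=
  if asb (chosen (deg i)) then orbit_rep (deg i) else gb (orbit_rep (deg i)).

Lemma ndeg_same_coset i : sc (deg i) (ndeg i).
Proof.
rewrite /ndeg; case: asbP => [hc|nc]; first exact: (same_coset_sym hF hc).
have [hr|hr] := orbit_rep_spec (deg i); first by case: nc; exact: (same_coset_sym hF hr).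
by rewrite -{1}[deg i]gbarK; exact: gbar_same_coset hr.
Qed.

(* A nonzero homogeneous scalar of degree ndeg i - deg i: u_i e_i has degree
   ndeg i. *)
Definition nscal (i : 'I_n) : F :=
  proj1_sig (constructive_indefinite_description _ (ndeg_same_coset i)).
Lemma nscalP i : Fg (ndeg i - deg i) (nscal i) /\ nscal i != 0.
Proof. exact: (proj2_sig (constructive_indefinite_description _ (ndeg_same_coset i))). Qed.
Lemma nscal_unit i : nscal i \is a GRing.unit.
Proof. by case: (nscalP i) => h1 h2; exact: (Funit hF h1 h2). Qed.

(* For i chosen and j not, the normalized pairing u_i u_j b(e_i, e_j) has
   degree zero: if nonzero, both lie in one orbit with representative r, and
   ndeg i + ndeg j + eps = r + bar r + eps = 0. *)
Lemma normalized_pairing i j : chosen (deg i) -> ~ chosen (deg j) ->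
  Fg 0 (nscal i * nscal j * b (ei i) (ei j)).
Proof.
move=> ci ncj.
have [->|nz] := eqVneq (b (ei i) (ei j)) 0; first by rewrite mulr0; exact: Fg0.
have hij : sc (gb (deg i)) (deg j).
  by case: (asbP (sc (gb (deg i)) (deg j))) => // hn; move: nz; rewrite b_ei ?eqxx.
have -> : 0 = (ndeg i - deg i) + (ndeg j - deg j) + (deg i + deg j + eps).
  rewrite [(ndeg i - _) + _]addrACA -opprD subrKA /ndeg.
  have [-> ->] : asb (chosen (deg i)) = true /\ asb (chosen (deg j)) = false.
    by split; apply/asbP.
  rewrite -(@orbit_rep_eq (deg i) (deg j)); last by right.
  by rewrite /gbar opprD addrA subrr add0r addNr.
exact: (FgM hF (FgM hF (nscalP i).1 (nscalP j).1) (b_deg (degP i) (degP j))).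
Qed.

Lemma pairing_zero (X Y : 'I_n -> Prop) z :
  (forall i j, X i -> ~ Y j -> b (ei i) (ei j) = 0) ->
  supported X z -> (forall j, Y j -> b z (ei j) = 0) -> z = 0.
Proof.
move=> hXY hz hY; apply: b_nondeg_basis => j.
case: (asbP (Y j)) => [/hY //|nYj]; apply: (b_supported hz) => i Xi; exact: hXY.
Qed.

(* Dimension count: if the e_i, X i, are orthogonal to the e_j outside Y and
   the rescaled Gram matrix (u_i u_j b(e_i, e_j))_(X i, Y j) has entries in F_0,
   this matrix over the field F_0 has trivial left kernel, so #X <= #Y. *)
Lemma rank_le (X Y : 'I_n -> Prop) (u : 'I_n -> F) :
  (forall i j, X i -> ~ Y j -> b (ei i) (ei j) = 0) ->
  (forall i, u i \is a GRing.unit) ->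
  (forall i j, X i -> Y j -> Fg 0 (u i * u j * b (ei i) (ei j))) ->
  (size (idx X) <= size (idx Y))%N.
Proof.
move=> hXY hu hF0; case eX: (idx X) => [//|i0 t]; rewrite -eX.
set IX := idx X; set IY := idx Y.
have inX (k : 'I_(size IX)) : X (nth i0 IX k) by apply/asbP; rewrite -mem_idx mem_nth.
have inY (l : 'I_(size IY)) : Y (nth i0 IY l) by apply/asbP; rewrite -mem_idx mem_nth.
pose M : 'M[F0]_(size IX, size IY) := \matrix_(k, l) insubd (0 : F0)
   (u (nth i0 IX k) * u (nth i0 IY l) * b (ei (nth i0 IX k)) (ei (nth i0 IY l))).
have ME k l : val (M k l) =
    u (nth i0 IX k) * u (nth i0 IY l) * b (ei (nth i0 IX k)) (ei (nth i0 IY l)).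
  by rewrite mxE insubdK //; apply/asbP/hF0.
suff M_ker (w : 'rV_(size IX)) : w *m M = 0 -> w = 0.
  have /eqP <- : row_free M; last exact: rank_leq_col.
  rewrite -kermx_eq0; apply/eqP/row_matrixP => r; rewrite row0; apply: M_ker.
  by rewrite -row_mul mulmx_ker row0.
move=> hw.
set z := \sum_(k < size IX) (val (w 0 k) * u (nth i0 IX k)) *: ei (nth i0 IX k).
have z0 : z = 0.
  apply: (pairing_zero hXY) => [i nXi|j Yj].
    rewrite coord_sum big1 // => k _; rewrite coord_ei ifF //.
    by apply: contra_notF nXi => /eqP ->.
  have jIY : j \in IY by rewrite mem_idx; apply/asbP.
  have hl : (index j IY < size IY)%N by rewrite index_mem.
  have ej : nth i0 IY (Ordinal hl) = j by rewrite /= nth_index.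
  apply: (mulrI (hu j)); rewrite mulr0.
  have := congr1 (fun m : 'M_(1, size IY) => val (m 0 (Ordinal hl))) hw.
  rewrite !mxE rmorph_sum rmorph0 => <-.
  rewrite /z b_suml mulr_sumr; apply: eq_bigr => k _.
  by rewrite rmorphM /= ME ej bZ; ring.
apply/rowP => k; rewrite mxE; apply: val_inj; rewrite rmorph0.
apply: (mulIr (hu (nth i0 IX k))); rewrite mul0r.
pose c k := val (w 0 k) * u (nth i0 IX k).
by rewrite -[LHS]/(c k) -(coord_sum_nth i0 c k (idx_uniq X)) -/z z0 coord0.
Qed.

Lemma not_half_same_coset g h : ~ half g -> sc g h -> ~ half h.
Proof. by move=> nhg hgh hh; apply/nhg/(half_same_coset hh)/(same_coset_sym hF). Qed.

Lemma not_half_pair g h : ~ half g -> sc (gb g) h -> ~ half h.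
Proof. by move=> nhg hgh; apply: not_half_same_coset hgh; rewrite half_gbar. Qed.

Lemma same_orbit_half g h : same_orbit g h -> half g -> half h.
Proof. by case=> hgh hg; apply: half_same_coset hgh; rewrite ?half_gbar. Qed.

Definition off_half (i : 'I_n) : Prop := ~ half (deg i).
Definition chosen_idx (i : 'I_n) : Prop := ~ half (deg i) /\ chosen (deg i).
Definition unchosen_idx (i : 'I_n) : Prop := ~ half (deg i) /\ ~ chosen (deg i).

Lemma paired_idx i j : ~ half (deg i) -> b (ei i) (ei j) != 0 ->
  ~ half (deg j) /\ (chosen (deg j) <-> ~ chosen (deg i)).
Proof.
move=> nhi nz.
have hij : sc (gb (deg i)) (deg j).
  by case: (asbP (sc (gb (deg i)) (deg j))) => // hn; move: nz; rewrite b_ei ?eqxx.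
by split; [exact: not_half_pair hij | exact: chosen_pair hij].
Qed.

(* The two halves of the off-1/2 Gamma_F indices have the same size: apply
   rank_le in both directions with the normalizing scalars u_i. *)
Lemma chosen_le_unchosen : (size (idx chosen_idx) <= size (idx unchosen_idx))%N.
Proof.
apply: (rank_le (u := nscal)) => [i j [nhi ci] nuj||i j [_ ci] [_ ncj]].
- apply/eqP; apply: contra_notT nuj => nz.
  by have [nhj hc] := paired_idx nhi nz; split => // cj; exact: hc.1 cj ci.
- exact: nscal_unit.
- exact: normalized_pairing.
Qed.

Lemma unchosen_le_chosen : (size (idx unchosen_idx) <= size (idx chosen_idx))%N.
Proof.
apply: (rank_le (u := nscal)) => [i j [nhi nci] ncj||i j [_ nci] [_ cj]].
- apply/eqP; apply: contra_notT ncj => nz.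
  by have [nhj hc] := paired_idx nhi nz; split => //; exact: hc.2 nci.
- exact: nscal_unit.
- by rewrite [nscal i * _]mulrC b_sym; exact: normalized_pairing.
Qed.

Lemma size_idx_split (S P : 'I_n -> Prop) :
  size (idx S) = (size (idx (fun i => S i /\ P i)) + size (idx (fun i => S i /\ ~ P i)))%N.
Proof.
rewrite -(count_predC (fun i => asb (P i)) (idx S)) !count_filter !size_filter.
congr (_ + _)%N; apply: eq_count => i /=;
  case: (asbP (P i)) => hP; case: (asbP (S i)) => hS //=;
  by case: (asbP (_ /\ _)); tauto.
Qed.

Lemma off_half_dim : size (idx off_half) = (size (idx chosen_idx) * 2)%N.
Proof.
have e : size (idx chosen_idx) = size (idx unchosen_idx).
  by apply/eqP; rewrite eqn_leq chosen_le_unchosen unchosen_le_chosen.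
by rewrite muln2 -addnn {2}e (size_idx_split off_half (fun i => chosen (deg i))).
Qed.

(* q vanishes on the span of pairwise orthogonal basis vectors of degrees
   outside 1/2 Gamma_F, since then q(e_i) lies in F_(2 deg i) = 0. *)
Lemma q_isotropic (S : 'I_n -> Prop) x :
  (forall i j, S i -> S j -> ~ sc (gb (deg i)) (deg j)) ->
  (forall i, S i -> ~ half (deg i)) -> supported S x -> q x = 0.
Proof.
move=> hSS hS hx; have [lam hl] := polar_prop.
rewrite -(proj_id hx) /proj; have : all (fun i => asb (S i)) (idx S).
  by apply/allP => i; rewrite mem_idx.
elim: (idx S) => [|i r IH] /=; first by rewrite big_nil q0.
case/andP => /asbP Si hr; rewrite big_cons.
set y := \sum_(j <- r) coord x j *: ei j.
have hy : supported S y.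
  by rewrite /y big_seq; apply: supported_sum => j /(allP hr)/asbP; apply: supported_ei.
have -> : q (coord x i *: ei i + y) = polar q (coord x i *: ei i) y + q (coord x i *: ei i) + q y.
  by rewrite /polar addrAC !subrK.
rewrite hl (IH hr) (supported_orth hSS (supported_ei _ Si) hy).
rewrite qZ (Fg_outside_GammaF (q_deg (degP i))) ?mulr0 ?addr0 //.
exact: hS.
Qed.

(* The span of off_half is metabolic: the span of the chosen indices is a
   totally isotropic subspace of half its dimension. *)
Lemma off_half_metabolic : metabolic Vg q b (supported off_half).
Proof.
have chosen_orth i j : chosen_idx i -> chosen_idx j -> ~ sc (gb (deg i)) (deg j).
  by move=> [nhi ci] [_ cj] hij; exact: (chosen_pair nhi hij).1 cj ci.
exists (supported chosen_idx); split; first exact: supported_graded.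
split; first by move=> x; apply: supported_mono => i [].
split.
  exists (size (idx off_half)), (size (idx chosen_idx)).
  by split; [|split]; [exact: supported_dim | exact: supported_dim | rewrite off_half_dim].
split; last by move=> x y; exact: supported_orth chosen_orth.
by move=> x; apply: q_isotropic chosen_orth _ => i [].
Qed.

(* Spans of pairwise disjoint supports are independent: compare the
   coordinates on each basis vector. *)
Lemma supported_independent (I : Type) (J : I -> Prop) (same : I -> I -> Prop)
    (S : I -> 'I_n -> Prop) (s : seq (I * V)) :
  (forall i i' k, J i -> J i' -> S i k -> S i' k -> same i i') ->
  List.Forall (fun p => J p.1 /\ supported (S p.1) p.2) s ->
  List.ForallOrdPairs (fun p p' => ~ same p.1 p'.1) s ->
  \sum_(p <- s) p.2 = 0 -> List.Forall (fun p => p.2 = 0) s.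
Proof.
move=> hdisj hs hp hsum.
suff coord_zero k : List.Forall (fun p => coord p.2 k = 0) s.
  apply/List.Forall_forall => p ps; apply: coord_eq0 => k.
  exact: (List.Forall_forall _ _).1 (coord_zero k) p ps.
have sum0 t : List.Forall (fun p => coord p.2 k = 0) t -> \sum_(p <- t) coord p.2 k = 0.
  by elim=> [|a l ha _ IH]; rewrite ?big_nil // big_cons ha IH addr0.
have : \sum_(p <- s) coord p.2 k = 0 by rewrite -coord_sum hsum coord0.
elim: s hs hp {hsum} => [|p s IH] hs hp hz; first by constructor.
inversion hs as [|? ? [Jp Sp] hs']; inversion hp as [|? ? hhd hp']; subst.
rewrite big_cons in hz; case: (asbP (S p.1 k)) => Sk; last first.
  by rewrite Sp // add0r in hz; constructor; [exact: Sp | exact: IH hs' hp' hz].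
have others : List.Forall (fun p' => coord p'.2 k = 0) s.
  apply: List.Forall_impl (List.Forall_and hhd hs') => p' [nsame [Jp' Sp']].
  by apply: Sp' => Sk'; apply: nsame; exact: hdisj Jp Jp' Sk Sk'.
by rewrite sum0 // addr0 in hz; constructor.
Qed.

Lemma orth_sum_supported (I : Type) (J : I -> Prop) (same : I -> I -> Prop)
    (W : V -> Prop) (U : I -> V -> Prop) (R : 'I_n -> Prop)
    (S : I -> 'I_n -> Prop) (piece : 'I_n -> I) :
  (forall x, W x <-> supported R x) ->
  (forall i x, J i -> U i x <-> supported (S i) x) ->
  (forall i k, J i -> S i k -> R k) ->
  (forall k, R k -> J (piece k) /\ S (piece k) k) ->
  (forall i i' k, J i -> J i' -> S i k -> S i' k -> same i i') ->
  (forall i j k l, J i -> J j -> ~ same i j -> S i k -> S j l ->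
     ~ sc (gb (deg k)) (deg l)) ->
  orth_sum b W J same U.
Proof.
move=> hW hU hSR hpiece hdisj horth; split; last first.
  move=> i j x y Ji Jj nij /(hU _ _ Ji) hx /(hU _ _ Jj) hy.
  by apply: supported_orth hx hy => k l; exact: horth.
split.
  by move=> i x Ji /(hU _ _ Ji) hx; apply/hW; move: hx; apply: supported_mono => k; exact: hSR.
split=> [x /hW hx|s hs].
  exists [seq (piece k, coord x k *: ei k) | k <- idx R]; split.
    apply: Forall_map => k; rewrite mem_idx => /asbP Rk /=.
    by have [Jk Sk] := hpiece k Rk; split => //; apply/hU => //; exact: supported_ei.
  by rewrite big_map -{1}(proj_id hx).
apply: supported_independent hdisj _.
by apply: List.Forall_impl hs => p [Jp hp]; split => //; apply/hU.
Qed.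

Lemma decomposition_H_Psi : orth_sum b (fun _ => True) (fun _ : bool => True) eq
  (fun t : bool => if t then coset_sum half else coset_sum (fun g => ~ half g)).
Proof.
apply: (orth_sum_supported (R := fun _ => True)
  (S := fun t : bool => if t then fun i => half (deg i) else off_half)
  (piece := fun k => asb (half (deg k)))) => //.
- by move=> x; split => // _ i.
- move=> [] x _; apply: coset_sum_supported; first exact: half_same_coset.
  exact: not_half_same_coset.
- by move=> k _; case: asbP.
- by move=> [] [] k.
- move=> [] [] k l _ _ //= _ hk hl hkl.
    by apply/hl/(half_same_coset _ hkl)/half_gbar.
  by apply/hk/half_gbar/(half_same_coset hl (same_coset_sym hF hkl)).
Qed.

Lemma decomposition_H : orth_sum b (coset_sum half) half sc Vc.
Proof.
apply: (orth_sum_supported (R := fun i => half (deg i))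
  (S := fun g i => sc g (deg i)) (piece := deg)).
- by move=> x; apply: coset_sum_supported; exact: half_same_coset.
- by move=> g x _; exact: Vcoset_supported.
- by move=> g k; exact: half_same_coset.
- by move=> k hk; split => //; exact: same_coset_refl.
- by move=> g g' k _ _ hk hk'; exact: (same_coset_trans hF hk (same_coset_sym hF hk')).
- move=> g g' k l hg _ ngg hk hl hkl; apply: ngg.
  apply: (same_coset_trans hF ((fixed_iff_half g).2 hg)).
  apply: (same_coset_trans hF (gbar_same_coset hk)).
  exact: (same_coset_trans hF hkl (same_coset_sym hF hl)).
Qed.

Lemma decomposition_Psi :
  orth_sum b (coset_sum (fun g => ~ half g)) (fun g => ~ half g) same_orbit orbit_space.
Proof.
apply: (orth_sum_supported (R := off_half)
  (S := fun g i => same_orbit g (deg i)) (piece := deg)).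
- by move=> x; apply: coset_sum_supported; exact: not_half_same_coset.
- by move=> g x _; exact: orbit_space_supported.
- by move=> g k nhg hk hhk; apply/nhg/(same_orbit_half (same_orbit_sym hk)).
- by move=> k hk; split => //; exact: same_orbit_refl.
- by move=> g g' k _ _ hk hk'; exact: same_orbit_trans hk (same_orbit_sym hk').
- move=> g g' k l _ _ ngg hk hl hkl; apply: ngg.
  apply: same_orbit_trans (same_orbit_trans hk (or_intror hkl)) (same_orbit_sym hl).
Qed.

Lemma coset_quad_space g : half g -> eps_quad_space Fg Vg eps q b (Vc g).
Proof.
move=> hg; rewrite (pred_ext (Vcoset_supported g)); apply: supported_quad_space.
move=> i j hi hij; apply: (same_coset_trans hF ((fixed_iff_half g).2 hg)).
exact: (same_coset_trans hF (gbar_same_coset hi) hij).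
Qed.

Lemma Psi_quad_space : eps_quad_space Fg Vg eps q b (coset_sum (fun g => ~ half g)).
Proof.
rewrite (pred_ext (fun x => coset_sum_supported x not_half_same_coset)).
by apply: supported_quad_space => i j; exact: not_half_pair.
Qed.

Lemma Psi_metabolic : metabolic Vg q b (coset_sum (fun g => ~ half g)).
Proof.
rewrite (pred_ext (fun x => coset_sum_supported x not_half_same_coset)).
exact: off_half_metabolic.
Qed.
End Decomposition.

Lemma of_type_restrict (G : zmodType) (F : comUnitRingType) (V : lmodType F)
    (eps : G) (q : V -> F) (b : V -> V -> F) (T : qtype F) (W : V -> Prop) :
  of_type eps q b T (fun _ => True) -> of_type eps q b T W.
Proof.
case: T => /=.
- by case=> [[e0 hb]|h0]; [left; split => // x y _ _; exact: hb | right => x _; exact: h0].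
- by case=> h1 h2; split => *; [apply: h1 | apply: h2].
- by move=> tau h x _; apply: h.
Qed.

Theorem proposition3p4
  (G : zmodType) (hG : divisible_torsion_free G)
  (F : comUnitRingType) (Fg : G -> F -> Prop) (hF : graded_field Fg)
  (eps : G) (heps : GammaF Fg eps)
  (V : lmodType F) (Vg : G -> V -> Prop) (hV : graded_space Fg Vg)
  (q : V -> F) (b : V -> V -> F)
  (hPhi : eps_quad_space Fg Vg eps q b (fun _ => True))
  (T : qtype F)
  (htau : match T with TypeIII tau => Fg eps tau /\ tau != 0 | _ => True end)
  (hT : of_type eps q b T (fun _ => True)) :
  let half := halfGammaF Fg in
  let Vc := Vcoset Fg Vg in
  (* the orthogonal sum of the Phi_Lambda, Lambda in 1/2 Gamma_F / Gamma_F *)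
  let H := fun x : V => exists s : seq (G * V),
       List.Forall (fun p => half p.1 /\ Vc p.1 p.2) s /\ x = \sum_(p <- s) p.2 in
  (* the underlying space of Psi *)
  let Psi := fun x : V => exists s : seq (G * V),
       List.Forall (fun p => ~ half p.1 /\ Vc p.1 p.2) s /\ x = \sum_(p <- s) p.2 in
  (* V_Lambda + V_{Lambda-bar}, Lambda = [g] *)
  let VP := fun (g : G) (x : V) => exists y z,
       Vc g y /\ Vc (gbar eps g) z /\ x = y + z in
  (* [g] and [h] lie in the same orbit {Lambda, Lambda-bar} *)
  let sameP := fun g h : G => same_coset Fg g h \/ same_coset Fg (gbar eps g) h in
  orth_sum b (fun _ => True) (fun _ : bool => True) eq
           (fun t : bool => if t then H else Psi) /\
  orth_sum b H half (same_coset Fg) Vc /\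
  orth_sum b Psi (fun g => ~ half g) sameP VP /\
  (forall g, half g ->
     eps_quad_space Fg Vg eps q b (Vc g) /\ of_type eps q b T (Vc g)) /\
  eps_quad_space Fg Vg eps q b Psi /\ of_type eps q b T Psi /\
  metabolic Vg q b Psi.
Proof.
move=> half Vc H Psi VP sameP.
split; first exact: (decomposition_H_Psi hF heps hV hPhi).
split; first exact: (decomposition_H hF heps hV hPhi).
split; first exact: (decomposition_Psi hF heps hV hPhi).
split.
  move=> g hg; split; last exact: of_type_restrict.
  exact: (coset_quad_space hF heps hV hPhi hg).
split; first exact: (Psi_quad_space hF heps hV hPhi).
split; first exact: of_type_restrict.
exact: (Psi_metabolic hF heps hV hPhi).
Qed.
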